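(* Let $n\in\mathbb{N}$ and assume $(Q_{n-1})$: $d_{i,l}+d_{j,k}\le d_{i,k}+d_{j,l}$ for all integers $-1\le i\le j\le k\le l\le n-1$. Then for each $m\in\mathbb{N}$ with $m\le n$, the minimization problem defining $d_{m,n}$ admits an optimal transport plan that is both simple and nested.
   Context: Let $\mathbb{N}=\{0,1,2,\dots\}$. Fix a sequence $(\pi^n)_{n\in\mathbb{N}}$ where each $\pi^n=(\pi^n_i)_{i\in\mathbb{N}}$ is a probability distribution on $\mathbb{N}$ with support contained in $\{0,\dots,n\}$, and $\pi^n\ne\pi^m$ for $m\ne n$. Define reals $d_{m,n}$ for $m,n\in\mathbb{N}\cup\{-1\}$ recursively as follows: $d_{-1,-1}=0$, $d_{-1,j}=d_{j,-1}=1$ for $j\in\mathbb{N}$, and for $m,n\in\mathbb{N}$, $$d_{m,n}=\min_{z\in\mathcal{F}_{m,n}}\sum_{i=0}^m\sum_{j=0}^n z_{i,j}\,d_{i-1,j-1},$$ where $\mathcal{F}_{m,n}$ is the set of transport plans from $\pi^m$ to $\pi^n$, i.e. arrays $z=(z_{i,j})_{0\le i\le m,\,0\le j\le n}$ with $z_{i,j}\ge0$, $\sum_{j=0}^n z_{i,j}=\pi^m_i$ for all $i\le m$, and $\sum_{i=0}^m z_{i,j}=\pi^n_j$ for all $j\le n$. For $m\le n$, a transport plan $z\in\mathcal{F}_{m,n}$ is simple if $z_{i,i}=\min\{\pi^m_i,\pi^n_i\}$ for all $i=0,\dots,m$; it is nested if there are no indices $i<j<k<l$ with $z_{i,k}>0$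 and $z_{j,l}>0$. *)

From HB Require Import structures.
From mathcomp Require Import all_boot all_order all_algebra.
From mathcomp Require Import reals.
Set Implicit Arguments. Unset Strict Implicit. Unset Printing Implicit Defensive.
Import Order.TTheory GRing.Theory Num.Theory.
Local Open Scope ring_scope.

Section Defs.
Variable R : realType.

Definition prob_seq (pi : nat -> nat -> R) : Prop :=
  [/\ (forall n i, 0 <= pi n i),
      (forall n i, (n < i)%N -> pi n i = 0),
      (forall n, \sum_(i < n.+1) pi n i = 1) &
      (forall m n, m <> n -> pi m <> pi n)].

Definition transport_plan (pi : nat -> nat -> R) (m n : nat)
    (z : nat -> nat -> R) : Prop :=
  [/\ (forall i j, (i <= m)%N -> (j <= n)%N -> 0 <= z i j),
      (forall i, (i <= m)%N -> \sum_(j < n.+1) z i j = pi m i) &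
      (forall j, (j <= n)%N -> \sum_(i < m.+1) z i j = pi n j)].

Definition plan_cost (d : int -> int -> R) (m n : nat) (z : nat -> nat -> R) : R :=
  \sum_(i < m.+1) \sum_(j < n.+1) z i j * d (i%:Z - 1) (j%:Z - 1).

(* d is the family d_{m,n} (m,n in N u {-1}) defined recursively in the paper:
   base values, and d_{m,n} = min over transport plans of the cost. *)
Definition is_d (pi : nat -> nat -> R) (d : int -> int -> R) : Prop :=
  [/\ d (-1) (-1) = 0,
      (forall j : nat, d (-1) j%:Z = 1 /\ d j%:Z (-1) = 1) &
      (forall m n : nat,
         (exists z, transport_plan pi m n z /\ plan_cost d m n z = d m%:Z n%:Z) /\
         (forall z, transport_plan pi m n z -> d m%:Z n%:Z <= plan_cost d m n z))].

Definition condQ (d : int -> int -> R) (K : int) : Prop :=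
  forall i j k l : int, -1 <= i -> i <= j -> j <= k -> k <= l -> l <= K ->
    d i l + d j k <= d i k + d j l.

Definition simple_plan (pi : nat -> nat -> R) (m n : nat) (z : nat -> nat -> R) :=
  forall i, (i <= m)%N -> z i i = Num.min (pi m i) (pi n i).

Definition nested_plan (m n : nat) (z : nat -> nat -> R) :=
  ~ exists i j k l : nat,
      [/\ (i < j < k)%N, (k < l)%N, (j <= m)%N, (l <= n)%N &
          (0 < z i k /\ 0 < z j l)].

End Defs.

From mathcomp Require Import all_boot all_order all_algebra.
From mathcomp Require Import reals zify ring lra.
Import Order.TTheory GRing.Theory Num.Theory.
Set Implicit Arguments. Unset Strict Implicit. Unset Printing Implicit Defensive.
Local Open Scope ring_scope.

(* Start from any optimal plan and improve it by 2x2 exchanges: moving mass from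
   (i1, j2), (i2, j1) to (i1, j1), (i2, j2) keeps the marginals and changes the
   cost by a multiple of c(i1,j1) + c(i2,j2) - c(i1,j2) - c(i2,j1), where
   c(p,q) = d(p-1,q-1), and it empties one of the two source entries.
   Gluing optimal plans shows that c satisfies the triangle inequality, and the
   diagonal plan gives c(p,p) <= 0, so rerouting mass from (i,j), (k,i) through
   the diagonal never costs more; repeating this saturates every z(i,i) at
   min(pi^m_i, pi^n_i).  Condition (Q_{n-1}) says that c is a Monge matrix, so
   replacing a crossing pair (t,K), (j,l) by (t,l), (j,K) keeps the plan optimal
   without touching the diagonal.  Crossings are removed in lexicographic order
   of their outer entry (t,K); for a fixed (t,K) each exchange either empties
   (t,K) or strictly decreases the number of positive entries (x,y) with
   t < x < K < y. *)

Definition cost (R : realType) (d : int -> int -> R) (p q : nat) : R :=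
  d (p%:Z - 1) (q%:Z - 1).

Lemma descent (T : Type) (Inv P : T -> Prop) (mu : T -> nat) :
    (forall x, Inv x -> P x \/ exists y, Inv y /\ (P y \/ (mu y < mu x)%N)) ->
  forall x, Inv x -> exists y, Inv y /\ P y.
Proof.
move=> step x; have [N] := ubnP (mu x); elim: N x => // N IH x ltxN Ix.
have [Px|[y [Iy [Py|ltyx]]]] := step x Ix; [by exists x | by exists y |].
exact: IH y (leq_trans ltyx ltxN) Iy.
Qed.

Section TransportPlans.
Variable R : realType.
Variable pi : nat -> nat -> R.
Implicit Types (z : nat -> nat -> R) (d : int -> int -> R) (a b c i j k M N x y : nat).

Lemma sum_indicator N (F : nat -> R) a : (a <= N)%N ->
  \sum_(x < N.+1) ((x : nat) == a)%:R * F x = F a.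
Proof.
move=> ha; rewrite (bigD1 (Ordinal (ha : (a < N.+1)%N))) //= eqxx mul1r.
by rewrite big1 ?addr0 // => x /negbTE xna; rewrite [(x : nat) == a]xna mul0r.
Qed.

Lemma entry_le_sum N (F : nat -> R) a : (a <= N)%N -> (forall x, (x <= N)%N -> 0 <= F x) ->
  F a <= \sum_(x < N.+1) F x.
Proof.
move=> ha F0; rewrite (bigD1 (Ordinal (ha : (a < N.+1)%N))) //= lerDl.
by apply: sumr_ge0 => -[x hx] _; apply: F0.
Qed.

Lemma exists_other_gt0 N (F : nat -> R) a : (a <= N)%N -> (forall x, (x <= N)%N -> 0 <= F x) ->
  F a < \sum_(x < N.+1) F x -> exists x, [/\ (x <= N)%N, x != a & 0 < F x].
Proof.
move=> ha F0; rewrite (bigD1 (Ordinal (ha : (a < N.+1)%N))) //= ltrDl => pos.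
have [|[x hx] /andP [nxa Fx]] := psumr_neq0P _ (elimF eqP (gt_eqF pos)).
  by move=> -[x hx] _; apply: F0.
by exists x.
Qed.

Lemma plan_target_ge0 a b z j : transport_plan pi a b z -> (j <= b)%N -> 0 <= pi b j.
Proof. by case=> z0 _ zc hj; rewrite -zc //; apply: sumr_ge0 => -[i hi] _; exact: z0. Qed.

Lemma plan_col_eq0 a b z i j : transport_plan pi a b z -> (i <= a)%N -> (j <= b)%N ->
  pi b j = 0 -> z i j = 0.
Proof.
move=> [z0 _ zc] hi hj pi0; have /psumr_eq0P z_eq0 := etrans (zc j hj) pi0.
by apply: (z_eq0 _ (Ordinal (hi : (i < a.+1)%N))) => // -[k hk] _; exact: z0.
Qed.

Lemma plan_row_eq0 a b z i j : transport_plan pi a b z -> (i <= a)%N -> (j <= b)%N ->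
  pi a i = 0 -> z i j = 0.
Proof.
move=> [z0 zr _] hi hj pi0; have /psumr_eq0P z_eq0 := etrans (zr i hi) pi0.
by apply: (z_eq0 _ (Ordinal (hj : (j < b.+1)%N))) => // -[k hk] _; exact: z0.
Qed.

Lemma plan_cost_bounds d a b z : transport_plan pi a b z -> \sum_(i < a.+1) pi a i = 1 ->
    (forall i j, (i <= a)%N -> (j <= b)%N -> 0 <= cost d i j <= 1) ->
  0 <= plan_cost d a b z <= 1.
Proof.
move=> [z0 zr _] mass1 bnd; apply/andP; split.
  apply: sumr_ge0 => -[i hi] _; apply: sumr_ge0 => -[j hj] _.
  by rewrite mulr_ge0 ?z0 //; case/andP: (bnd i j hi hj).
rewrite -mass1; apply: ler_sum => -[i hi] _; rewrite -zr //; apply: ler_sum => -[j hj] _.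
by rewrite ler_piMr ?z0 //; case/andP: (bnd i j hi hj).
Qed.

Lemma mulr_divff (x p : R) : (p = 0 -> x = 0) -> x * (p / p) = x.
Proof.
have [-> /(_ erefl) ->|p0 _] := eqVneq p 0; first by rewrite mul0r.
by rewrite divff ?mulr1.
Qed.

(* Composition of z1 with the conditional kernel of z2; when pi b j = 0 the
   junk division is harmless because column j of z1 and row j of z2 vanish. *)
Definition glue b z1 z2 i k := \sum_(j < b.+1) z1 i j * (z2 j k / pi b j).

Section Glue.
Variables (a b c : nat) (z1 z2 : nat -> nat -> R).
Hypotheses (hz1 : transport_plan pi a b z1) (hz2 : transport_plan pi b c z2).

Lemma glue_row_weight i j : (i <= a)%N -> (j <= b)%N ->
  z1 i j * \sum_(k < c.+1) (z2 j k / pi b j) = z1 i j.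
Proof.
move=> hi hj; have [_ zr _] := hz2.
by rewrite -mulr_suml zr // mulr_divff // => /(plan_col_eq0 hz1 hi hj).
Qed.

Lemma glue_col_weight j k : (j <= b)%N -> (k <= c)%N ->
  \sum_(i < a.+1) z1 i j * (z2 j k / pi b j) = z2 j k.
Proof.
move=> hj hk; have [_ _ zc] := hz1.
by rewrite -mulr_suml zc // mulrCA mulr_divff // => /(plan_row_eq0 hz2 hj hk).
Qed.

Lemma glue_weight_ge0 i j k : (i <= a)%N -> (j <= b)%N -> (k <= c)%N ->
  0 <= z1 i j * (z2 j k / pi b j).
Proof.
move=> hi hj hk; have [z10 _ _] := hz1; have [z20 _ _] := hz2.
by rewrite mulr_ge0 ?divr_ge0 ?z10 ?z20 ?(plan_target_ge0 hz1).
Qed.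

Lemma glue_plan : transport_plan pi a c (glue b z1 z2).
Proof.
have [_ zr1 _] := hz1; have [_ _ zc2] := hz2; split.
- by move=> i k hi hk; apply: sumr_ge0 => -[j hj] _; apply: glue_weight_ge0.
- move=> i hi; rewrite exchange_big -(zr1 i hi); apply: eq_bigr => -[j hj] _ /=.
  by rewrite -mulr_sumr glue_row_weight.
- move=> k hk; rewrite exchange_big -(zc2 k hk); apply: eq_bigr => -[j hj] _ /=.
  exact: glue_col_weight.
Qed.

Lemma glue_cost_le d :
    (forall i j k, (i <= a)%N -> (j <= b)%N -> (k <= c)%N ->
      cost d i k <= cost d i j + cost d j k) ->
  plan_cost d a c (glue b z1 z2) <= plan_cost d a b z1 + plan_cost d b c z2.
Proof.
move=> tri; pose w i j k := z1 i j * (z2 j k / pi b j).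
have -> : plan_cost d a b z1 + plan_cost d b c z2 = \sum_(i < a.+1) \sum_(k < c.+1)
    \sum_(j < b.+1) w i j k * (cost d i j + cost d j k).
  under [RHS]eq_bigr do under eq_bigr do under eq_bigr do rewrite mulrDr.
  under [RHS]eq_bigr do under eq_bigr do rewrite big_split /=.
  under [RHS]eq_bigr do rewrite big_split /=.
  rewrite big_split /=; congr (_ + _).
    apply: eq_bigr => -[i hi] _; rewrite exchange_big; apply: eq_bigr => -[j hj] _ /=.
    rewrite -{1}(glue_row_weight hi hj) mulr_sumr mulr_suml.
    by apply: eq_bigr => k _; rewrite /w mulrAC.
  rewrite [RHS]exchange_big; under [RHS]eq_bigr do rewrite exchange_big.
  rewrite [RHS]exchange_big; apply: eq_bigr => -[j hj] _; apply: eq_bigr => -[k hk] _ /=.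
  by rewrite -{1}(glue_col_weight hj hk) mulr_suml.
apply: ler_sum => -[i hi] _; apply: ler_sum => -[k hk] _; rewrite mulr_suml.
by apply: ler_sum => -[j hj] _; rewrite ler_wpM2l ?glue_weight_ge0 ?tri.
Qed.

End Glue.
Definition unit_at a b x y : R := ((x, y) == (a, b))%:R.

Lemma unit_atE a b x y : unit_at a b x y = (x == a)%:R * (y == b)%:R.
Proof. by rewrite /unit_at xpair_eqE -natrM mulnb. Qed.

Lemma sum_unit_at_row N a b x : (b <= N)%N ->
  \sum_(y < N.+1) unit_at a b x y = (x == a)%:R.
Proof.
move=> hb; apply: etrans _ (sum_indicator (fun=> (x == a)%:R) hb).
by apply: eq_bigr => y _; rewrite unit_atE mulrC.
Qed.

Lemma sum_unit_at_col M a b y : (a <= M)%N ->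
  \sum_(x < M.+1) unit_at a b x y = (y == b)%:R.
Proof.
move=> ha; apply: etrans _ (sum_indicator (fun=> (y == b)%:R) ha).
by apply: eq_bigr => x _; rewrite unit_atE.
Qed.

Lemma plan_cost_unit_at d M N a b : (a <= M)%N -> (b <= N)%N ->
  plan_cost d M N (unit_at a b) = cost d a b.
Proof.
move=> ha hb; apply: etrans _ (sum_indicator (cost d ^~ b) ha).
apply: eq_bigr => x _; rewrite -(sum_indicator (cost d x) hb) mulr_sumr.
by apply: eq_bigr => y _; rewrite unit_atE -mulrA.
Qed.

Definition exchange z (i1 i2 j1 j2 : nat) x y :=
  z x y + Num.min (z i1 j2) (z i2 j1) *
    (unit_at i1 j1 x y + unit_at i2 j2 x y - unit_at i1 j2 x y - unit_at i2 j1 x y).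

Section ExchangeEntries.
Variables (z : nat -> nat -> R) (i1 i2 j1 j2 : nat).
Local Notation e := (Num.min (z i1 j2) (z i2 j1)).
Local Notation z' := (exchange z i1 i2 j1 j2).

Lemma exchange_ge x y : 0 <= e -> (x, y) != (i1, j2) -> (x, y) != (i2, j1) ->
  z x y <= z' x y.
Proof.
move=> e0 n12 n21; rewrite /exchange /unit_at (negbTE n12) (negbTE n21) !subr0.
by rewrite lerDl mulr_ge0 ?addr_ge0 ?ler0n.
Qed.

Lemma exchange_le x y : 0 <= e -> (x, y) != (i1, j1) -> (x, y) != (i2, j2) ->
  z' x y <= z x y.
Proof.
move=> e0 n11 n22; rewrite /exchange /unit_at (negbTE n11) (negbTE n22) add0r sub0r.
by rewrite gerDl mulr_ge0_le0 // -opprD oppr_le0 addr_ge0 ?ler0n.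
Qed.

Lemma exchange_gt0 x y : 0 <= e -> 0 < z' x y ->
  [\/ 0 < z x y, (x, y) = (i1, j1) | (x, y) = (i2, j2)].
Proof.
move=> e0 pos; have [e11|n11] := eqVneq (x, y) (i1, j1); first by constructor 2.
have [e22|n22] := eqVneq (x, y) (i2, j2); first by constructor 3.
by constructor 1; apply: lt_le_trans pos (exchange_le e0 n11 n22).
Qed.

Lemma exchange_gt0_in (A : nat -> nat -> bool) x y : 0 <= e ->
  ~~ A i1 j1 -> ~~ A i2 j2 -> A x y -> 0 < z' x y -> 0 < z x y.
Proof.
move=> e0 nA11 nA22 Axy /(exchange_gt0 e0) [//|[ex ey]|[ex ey]]; subst x y.
  by rewrite Axy in nA11.
by rewrite Axy in nA22.
Qed.

Hypotheses (ni : i1 != i2) (nj : j1 != j2).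

Lemma exchange12 : z' i1 j2 = z i1 j2 - e.
Proof.
rewrite /exchange /unit_at !xpair_eqE !eqxx (negbTE ni) eq_sym (negbTE nj) /=.
lra.
Qed.

Lemma exchange21 : z' i2 j1 = z i2 j1 - e.
Proof.
rewrite /exchange /unit_at !xpair_eqE !eqxx eq_sym (negbTE ni) (negbTE nj) /=.
lra.
Qed.

Lemma exchange_vanishes : z' i1 j2 = 0 \/ z' i2 j1 = 0.
Proof.
rewrite exchange12 exchange21; have [le|lt] := leP (z i1 j2) (z i2 j1).
  by left; rewrite subrr.
by right; rewrite subrr.
Qed.

End ExchangeEntries.

Lemma exchange_cost d M N z (i1 i2 j1 j2 : nat) :
    (i1 <= M)%N -> (i2 <= M)%N -> (j1 <= N)%N -> (j2 <= N)%N ->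
  plan_cost d M N (exchange z i1 i2 j1 j2) = plan_cost d M N z +
    Num.min (z i1 j2) (z i2 j1) *
      (cost d i1 j1 + cost d i2 j2 - cost d i1 j2 - cost d i2 j1).
Proof.
move=> hi1 hi2 hj1 hj2; rewrite -!(plan_cost_unit_at d (M:=M) (N:=N)) // /plan_cost.
under eq_bigr do under eq_bigr do rewrite mulrDl -mulrA.
under eq_bigr do rewrite big_split /= -mulr_sumr.
rewrite big_split /= -mulr_sumr; congr (_ + _ * _).
rewrite -big_split -!sumrB; apply: eq_bigr => x _.
by rewrite -big_split -!sumrB; apply: eq_bigr => y _ /=; ring.
Qed.

Lemma exchange_plan M N z (i1 i2 j1 j2 : nat) : transport_plan pi M N z ->
    (i1 <= M)%N -> (i2 <= M)%N -> (j1 <= N)%N -> (j2 <= N)%N ->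
    i1 != i2 -> j1 != j2 ->
  transport_plan pi M N (exchange z i1 i2 j1 j2).
Proof.
move=> [z0 zr zc] hi1 hi2 hj1 hj2 ni nj.
have e0 : 0 <= Num.min (z i1 j2) (z i2 j1) by rewrite le_min !z0.
split.
- move=> x y hx hy.
  have [[-> ->]|n12] := eqVneq (x, y) (i1, j2).
    by rewrite exchange12 // subr_ge0 ge_min lexx.
  have [[-> ->]|n21] := eqVneq (x, y) (i2, j1).
    by rewrite exchange21 // subr_ge0 ge_min lexx orbT.
  exact: le_trans (z0 _ _ hx hy) (exchange_ge e0 n12 n21).
- move=> x hx; rewrite /exchange big_split /= -mulr_sumr !sumrB big_split /=.
  by rewrite !sum_unit_at_row // zr //; ring.
- move=> y hy; rewrite /exchange big_split /= -mulr_sumr !sumrB big_split /=.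
  by rewrite !sum_unit_at_col // zc //; ring.
Qed.

End TransportPlans.

Lemma intS_sub1 (q : nat) : q.+1%:Z - 1 = q%:Z.
Proof. by rewrite intS addrC addKr. Qed.

Section CostMatrix.
Variable R : realType.
Variables (pi : nat -> nat -> R) (d : int -> int -> R).
Hypotheses (Hpi : prob_seq pi) (Hd : is_d pi d).
Implicit Types (p q r : nat) (z : nat -> nat -> R).

Lemma cost00 : cost d 0 0 = 0.
Proof. by case: Hd => d00 _ _; rewrite /cost sub0r. Qed.

Lemma cost0S q : cost d 0 q.+1 = 1.
Proof. by case: Hd => _ d1 _; rewrite /cost sub0r intS_sub1; case: (d1 q). Qed.

Lemma costS0 p : cost d p.+1 0 = 1.
Proof. by case: Hd => _ d1 _; rewrite /cost sub0r intS_sub1; case: (d1 p). Qed.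

Lemma costSS p q : cost d p.+1 q.+1 = d p q.
Proof. by rewrite /cost !intS_sub1. Qed.

Lemma d_attained p q : exists z, transport_plan pi p q z /\ plan_cost d p q z = d p q.
Proof. by case: Hd => _ _ dmin; case: (dmin p q). Qed.

Lemma d_le_cost p q z : transport_plan pi p q z -> d p q <= plan_cost d p q z.
Proof. by case: Hd => _ _ dmin; case: (dmin p q) => _; apply. Qed.

Lemma cost_bounds p q : 0 <= cost d p q <= 1.
Proof.
have [N] := ubnP (p + q); elim: N p q => // N IH [|p] [|q] ltN;
  rewrite ?cost00 ?cost0S ?costS0 ?lexx ?ler01 //.
rewrite costSS; have [z [hz <-]] := d_attained p q.
apply: plan_cost_bounds hz _ _; first by case: Hpi.
by move=> i j hi hj; apply: IH; lia.
Qed.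

Lemma cost_ge0 p q : 0 <= cost d p q.
Proof. by case/andP: (cost_bounds p q). Qed.

Lemma cost_le1 p q : cost d p q <= 1.
Proof. by case/andP: (cost_bounds p q). Qed.

Definition diag_plan p i j : R := pi p i * (i == j)%:R.

Lemma transport_plan_diag p : transport_plan pi p p (diag_plan p).
Proof.
have [pi0 _ _ _] := Hpi; split.
- by move=> i j _ _; rewrite mulr_ge0 ?ler0n.
- move=> i hi; apply: etrans _ (sum_indicator (fun=> pi p i) hi).
  by apply: eq_bigr => j _; rewrite /diag_plan mulrC eq_sym.
- move=> j hj; apply: etrans _ (sum_indicator (pi p) hj).
  by apply: eq_bigr => i _; rewrite /diag_plan mulrC.
Qed.

Lemma cost_diag_le0 p : cost d p p <= 0.
Proof.
elim/ltn_ind: p => -[_|p IH]; first by rewrite cost00.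
rewrite costSS; apply: le_trans (d_le_cost (transport_plan_diag p)) _.
have [pi0 _ _ _] := Hpi.
apply: sumr_le0 => -[i hi] _; rewrite (bigD1 (Ordinal hi)) //= big1 ?addr0.
  by rewrite /diag_plan eqxx mulr1 mulr_ge0_le0 ?IH.
by move=> j /negbTE ne; rewrite /diag_plan eq_sym [(j : nat) == i]ne mulr0 mul0r.
Qed.

Lemma cost_triangle p q r : cost d p r <= cost d p q + cost d q r.
Proof.
have [N] := ubnP (p + q + r); elim: N p q r => // N IH p q r ltN.
case: p q r ltN => [|p] [|q] [|r] ltN;
  rewrite ?cost00 ?cost0S ?costS0 ?add0r ?addr0 ?lexx //.
- by rewrite addr_ge0 ?ler01.
- by rewrite lerDl cost_ge0.
- by rewrite (le_trans (cost_le1 _ _)) // lerDl ler01.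
- by rewrite lerDr cost_ge0.
rewrite !costSS.
have [z1 [hz1 <-]] := d_attained p q; have [z2 [hz2 <-]] := d_attained q r.
apply: le_trans (d_le_cost (glue_plan hz1 hz2)) (glue_cost_le hz1 hz2 _).
by move=> i j k hi hj hk; apply: IH; lia.
Qed.

End CostMatrix.

Section OptimalPlans.
Variable R : realType.
Variables (pi : nat -> nat -> R) (d : int -> int -> R) (m n : nat).
Hypotheses (Hpi : prob_seq pi) (Hd : is_d pi d) (hmn : (m <= n)%N).
Implicit Types (z : nat -> nat -> R) (i j k l x y : nat).

Definition optimal z := transport_plan pi m n z /\ plan_cost d m n z = d m n.

Lemma exchange_optimal z (i1 i2 j1 j2 : nat) : optimal z ->
    (i1 <= m)%N -> (i2 <= m)%N -> (j1 <= n)%N -> (j2 <= n)%N -> i1 != i2 -> j1 != j2 ->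
    cost d i1 j1 + cost d i2 j2 <= cost d i1 j2 + cost d i2 j1 ->
  optimal (exchange z i1 i2 j1 j2).
Proof.
move=> [hz opt] hi1 hi2 hj1 hj2 ni nj gain; have [z0 _ _] := hz.
have hz' := exchange_plan hz hi1 hi2 hj1 hj2 ni nj; split => //.
apply/eqP; rewrite eq_le (d_le_cost Hd) // andbT exchange_cost // opt gerDl.
by rewrite mulr_ge0_le0 ?le_min ?z0 //; lra.
Qed.

Lemma diag_le_min z i : transport_plan pi m n z -> (i <= m)%N ->
  z i i <= Num.min (pi m i) (pi n i).
Proof.
move=> [z0 zr zc] him; have hin := leq_trans him hmn.
rewrite le_min -{1}(zr i him) -(zc i hin); apply/andP; split.
  by apply: (entry_le_sum (F := z i)) => // x hx; apply: z0.
by apply: (entry_le_sum (F := z^~ i)) => // x hx; apply: z0.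
Qed.

Definition support_in (A : nat -> nat -> bool) z : {set 'I_m.+1 * 'I_n.+1} :=
  [set p : 'I_m.+1 * 'I_n.+1 | A p.1 p.2 && (0 < z p.1 p.2)].

Lemma support_in_lt (A : nat -> nat -> bool) z z' x y :
    (forall x y, (x <= m)%N -> (y <= n)%N -> A x y -> 0 < z' x y -> 0 < z x y) ->
    (x <= m)%N -> (y <= n)%N -> A x y -> 0 < z x y -> z' x y = 0 ->
  (#|support_in A z'| < #|support_in A z|)%N.
Proof.
move=> sub hx hy Axy zxy z'xy; apply/proper_card/properP; split.
  apply/subsetP => -[[x' hx'] [y' hy']]; rewrite !inE /= => /andP [Axy' pos].
  by rewrite Axy' sub.
exists (Ordinal (hx : (x < m.+1)%N), Ordinal (hy : (y < n.+1)%N)); rewrite !inE /= Axy //.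
by rewrite z'xy ltxx.
Qed.

Definition saturated z i := z i i = Num.min (pi m i) (pi n i).

Lemma saturated_mono z z' i : transport_plan pi m n z' -> (i <= m)%N ->
  z i i <= z' i i -> saturated z i -> saturated z' i.
Proof.
move=> hz' him le sat; apply/eqP; rewrite eq_le diag_le_min //=.
by rewrite /saturated -sat.
Qed.

Lemma pair_diag_neq x i j : i != j -> (x, x) != (i, j).
Proof. by apply: contra => /eqP [<- <-]. Qed.

Definition row_col_off i x y := (x == i) != (y == i).

Lemma saturate_step i z : (i <= m)%N -> optimal z -> (forall x, (x < i)%N -> saturated z x) ->
  saturated z i \/ exists z', [/\ optimal z', forall x, (x < i)%N -> saturated z' x &
    (#|support_in (row_col_off i) z'| < #|support_in (row_col_off i) z|)%N].
Proof.
move=> him [hz cz] satz; have hin := leq_trans him hmn; have [z0 zr zc] := hz.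
have [|unsat] := eqVneq (z i i) (Num.min (pi m i) (pi n i)); first by left.
have := diag_le_min hz him; rewrite le_eqVlt (negbTE unsat) lt_min /= => /andP [ltm ltn].
have [j [hj nji posj]] : exists j, [/\ (j <= n)%N, j != i & 0 < z i j].
  by apply: exists_other_gt0; rewrite ?zr // => j hj; apply: z0.
have [k [hk nki posk]] : exists k, [/\ (k <= m)%N, k != i & 0 < z k i].
  by apply: (exists_other_gt0 (F := z^~ i)); rewrite ?zc // => k hk; apply: z0.
have e0 : 0 <= Num.min (z i j) (z k i) by rewrite le_min !ltW.
have [hz' cz'] : optimal (exchange z i k i j).
  apply: exchange_optimal; rewrite ?(eq_sym i) //.
  have := cost_triangle Hpi Hd k i j; have := cost_diag_le0 Hpi Hd i; lra.
right; exists (exchange z i k i j); split => //.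
  move=> x hxi; apply: saturated_mono (satz x hxi) => //; first exact: leq_trans (ltnW hxi) him.
  by apply: exchange_ge; rewrite ?pair_diag_neq // eq_sym.
have hA : forall x y, (x <= m)%N -> (y <= n)%N -> row_col_off i x y ->
    0 < exchange z i k i j x y -> 0 < z x y.
  move=> x y _ _; apply: (exchange_gt0_in (A := row_col_off i)) => //; rewrite /row_col_off.
    by rewrite eqxx.
  by rewrite (negbTE nki) (negbTE nji).
have nik : i != k by rewrite eq_sym.
have nij : i != j by rewrite eq_sym.
have [vanish|vanish] := exchange_vanishes z nik nij.
  by apply: (support_in_lt hA him hj) => //; rewrite /row_col_off eqxx (negbTE nji).
by apply: (support_in_lt hA hk hin) => //; rewrite /row_col_off eqxx (negbTE nki).
Qed.

Lemma saturate_diag i z : (i <= m)%N -> optimal z -> (forall x, (x < i)%N -> saturated z x) ->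
  exists z', optimal z' /\ forall x, (x < i.+1)%N -> saturated z' x.
Proof.
move=> him oz satz.
have [z' [[oz' satz'] sati]] : exists z',
    (optimal z' /\ forall x, (x < i)%N -> saturated z' x) /\ saturated z' i.
  apply: (descent (mu := fun z => #|support_in (row_col_off i) z|)) (conj oz satz).
  move=> {}z [{}oz {}satz]; case: (saturate_step him oz satz) => [|[z' [oz' satz' lt]]].
    by left.
  by right; exists z'; split; [split | right].
by exists z'; split => // x; rewrite ltnS leq_eqVlt => /predU1P [->|/satz'].
Qed.

Lemma exists_optimal_simple : exists z, optimal z /\ simple_plan pi m n z.
Proof.
suff gen t : (t <= m.+1)%N -> exists z, optimal z /\ forall x, (x < t)%N -> saturated z x.
  by have [z [oz sat]] := gen _ (leqnn m.+1); exists z.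
elim: t => [_|t IH ht]; first by have [z oz] := d_attained Hd m n; exists z.
by have [z [oz satz]] := IH (ltnW ht); exact: saturate_diag ht oz satz.
Qed.

Hypothesis HQ : condQ d (n%:Z - 1).

Lemma cost_monge i j k l : (i <= j)%N -> (j <= k)%N -> (k <= l)%N -> (l <= n)%N ->
  cost d i l + cost d j k <= cost d i k + cost d j l.
Proof. by move=> ij jk kl ln; apply: HQ; lia. Qed.

Definition crossing z i j k l :=
  [/\ (i < j < k)%N, (k < l)%N, (j <= m)%N, (l <= n)%N & 0 < z i k /\ 0 < z j l].

(* Crossings are ordered lexicographically by their outer entry (i, k); since
   k < n this order is encoded by i * n + k. *)
Definition uncrossed_below z N := forall i j k l, crossing z i j k l -> (N <= i * n + k)%N.

Definition optimal_simple z := optimal z /\ simple_plan pi m n z.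

Lemma exchange_optimal_simple z t j K l : optimal_simple z -> crossing z t j K l -> optimal_simple (exchange z t j l K).
Proof.
move=> [oz simz] [/andP [tj jK] Kl jm ln [posK posl]].
have tm : (t <= m)%N by apply: leq_trans (ltnW tj) jm.
have Kn : (K <= n)%N by apply: leq_trans (ltnW Kl) ln.
have oz' : optimal (exchange z t j l K).
  apply: exchange_optimal; rewrite // ?neq_ltn ?tj ?Kl ?orbT //.
  by apply: cost_monge; rewrite // ltnW // (ltn_trans tj jK).
split => // x hx; apply: saturated_mono (simz x hx) => //; first by case: oz'.
apply: exchange_ge; first by rewrite le_min !ltW.
  by apply: pair_diag_neq; rewrite neq_ltn (ltn_trans tj jK).
by apply: pair_diag_neq; rewrite neq_ltn (ltn_trans jK Kl).
Qed.

(* The new entries (t, l) and (j, K) lie after (t, K), and a crossing they would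
   close with an earlier outer entry is already closed by (t, K) or (j, l). *)
Lemma exchange_uncrossed z t j K l : crossing z t j K l ->
  uncrossed_below z (t * n + K) -> uncrossed_below (exchange z t j l K) (t * n + K).
Proof.
move=> [/andP [tj jK] Kl jm ln [posK posl]] unc i j' k l'.
move=> [/andP [ij' j'k] kl' j'm l'n [posik posj'l']]; rewrite leqNgt; apply/negP => below.
have e0 : 0 <= Num.min (z t K) (z j l) by rewrite le_min !ltW.
have zik : 0 < z i k.
  by case/(exchange_gt0 e0): posik => // -[ei ek]; subst i k; move: below; nia.
suff [j2 [l2 cr]] : exists j2 l2, crossing z i j2 k l2.
  by move: (unc _ _ _ _ cr); rewrite leqNgt below.
have tm : (t <= m)%N by apply: leq_trans (ltnW tj) jm.
have Kn : (K <= n)%N by apply: leq_trans (ltnW Kl) ln.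
case/(exchange_gt0 e0): posj'l' => [pos|[ej el]|[ej el]].
- by exists j', l'; split; rewrite ?ij'.
- subst j' l'; have [kK|Kk] := ltnP k K; first by exists t, K; split; rewrite ?ij' ?j'k.
  by exists j, l; split; rewrite ?(ltn_trans ij' tj) ?(leq_trans jK Kk).
- by subst j' l'; exists j, l; split; rewrite ?ij' ?j'k ?(ltn_trans kl' Kl).
Qed.

Definition crosses_at t K x y := [&& (t < x)%N, (x < K)%N & (K < y)%N].

Lemma uncross_at_step t K z : optimal_simple z -> uncrossed_below z (t * n + K) ->
  (forall j l, ~ crossing z t j K l) \/ exists z',
    [/\ optimal_simple z', uncrossed_below z' (t * n + K) &
      (forall j l, ~ crossing z' t j K l) \/
      (#|support_in (crosses_at t K) z'| < #|support_in (crosses_at t K) z|)%N].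
Proof.
move=> gz unc; have [[j [l cr]]|] := boolp.pselect (exists j l, crossing z t j K l); last first.
  by move=> nocr; left => j l cr; apply: nocr; exists j, l.
right; exists (exchange z t j l K); split; [exact: exchange_optimal_simple | exact: exchange_uncrossed |].
have [/andP [tj jK] Kl jm ln [posK posl]] := cr.
have [vanish|vanish] := exchange_vanishes z (negbT (ltn_eqF tj)) (negbT (gtn_eqF Kl)).
  by left=> j2 l2 [_ _ _ _ []]; rewrite vanish ltxx.
right; apply: (support_in_lt _ jm ln) => //; last by rewrite /crosses_at tj jK Kl.
move=> x y _ _; apply: exchange_gt0_in; rewrite ?le_min ?ltW //.
  by rewrite /crosses_at ltnn.
by rewrite /crosses_at ltnn !andbF.
Qed.

Lemma uncross_step t K z : (K < n)%N -> optimal_simple z -> uncrossed_below z (t * n + K) ->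
  exists z', optimal_simple z' /\ uncrossed_below z' (t * n + K).+1.
Proof.
move=> Kn gz unc.
have [z' [[gz' unc'] nocr]] : exists z',
    (optimal_simple z' /\ uncrossed_below z' (t * n + K)) /\ forall j l, ~ crossing z' t j K l.
  apply: (descent (mu := fun z => #|support_in (crosses_at t K) z|)) (conj gz unc).
  move=> {}z [{}gz {}unc]; case: (uncross_at_step gz unc) => [|[z' [gz' unc' progress]]].
    by left.
  by right; exists z'.
exists z'; split => // i j k l cr; rewrite ltn_neqAle (unc' _ _ _ _ cr) andbT.
have [/andP [_ jk] kl _ ln _] := cr.
apply/negP => /eqP /(congr1 (edivn^~ n)); rewrite !edivn_eq //; last exact: leq_trans kl ln.
by case=> ei ek; subst i k; apply: nocr cr.
Qed.

Lemma exists_optimal_simple_uncrossed N : (N <= m * n)%N -> exists z, optimal_simple z /\ uncrossed_below z N.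
Proof.
elim: N => [_|N IH ltN].
  by have [z gz] := exists_optimal_simple; exists z; split => // *.
have n_gt0 : (0 < n)%N by case: n ltN; rewrite ?muln0.
have [z [gz unc]] := IH (ltnW ltN); rewrite (divn_eq N n) in unc *.
exact: uncross_step (ltn_pmod N n_gt0) gz unc.
Qed.

Lemma uncrossed_nested z : uncrossed_below z (m * n) -> nested_plan m n z.
Proof.
move=> unc [i [j [k [l cr]]]]; have := unc _ _ _ _ cr.
by case: cr => /andP [ij _] kl jm ln _; nia.
Qed.

End OptimalPlans.

Theorem proposition2 (R : realType) (pi : nat -> nat -> R) (d : int -> int -> R)
    (n : nat) :
  prob_seq pi -> is_d pi d -> condQ d (n%:Z - 1) ->
  forall m : nat, (m <= n)%N ->
    exists z : nat -> nat -> R,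
      [/\ transport_plan pi m n z, plan_cost d m n z = d m%:Z n%:Z,
          simple_plan pi m n z & nested_plan m n z].
Proof.
move=> Hpi Hd HQ m hmn.
have [z [[[hz cz] simz] unc]] := exists_optimal_simple_uncrossed Hpi Hd hmn HQ (leqnn (m * n)).
by exists z; split => //; apply: uncrossed_nested.
Qed.
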